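(* For every command $c$ and stores $\sigma,\sigma'$ of the While-language: $(c,\sigma)\Rightarrow_B\sigma'$ if and only if $(c,\sigma,\Downarrow)\Rightarrow_G\sigma',\Downarrow$.
   Context: While-language syntax: variables $x$ range over a countably infinite set $\mathit{Var}$; $n$ ranges over natural numbers; values are $v ::= \mathsf{null}\mid n$ ($\mathsf{null}$ distinct from every natural number); expressions are $e ::= v\mid x\mid e_1\oplus e_2$ with $\oplus\in\{+,-,*\}$, where $\oplus(n_1,n_2)$ is the result of the operation on naturals; commands are $c ::= \mathsf{skip}\mid\mathsf{alloc}\ x\mid x:=e\mid c_1;c_2\mid \mathsf{if}\ e\ c_1\ c_2\mid\mathsf{while}\ e\ c$. A store $\sigma$ is a finite partial map from $\mathit{Var}$ to values, with domain $\mathrm{dom}(\sigma)$, lookup $\sigma(x)$, update $\sigma[x\mapsto v]$. Expression evaluation $(e,\sigma)\Rightarrow_E v$ is the least relation with: $(v,\sigma)\Rightarrow_E v$; $(x,\sigma)\Rightarrow_E\sigma(x)$ if $x\in\mathrm{dom}(\sigma)$; if $(e_1,\sigma)\Rightarrow_E n_1$ and $(e_2,\sigma)\Rightarrow_E n_2$ with $n_1,n_2$ naturals then $(e_1\oplus e_2,\sigma)\Rightarrow_E\oplus(n_1,n_2)$. Big-step relation $(c,\sigma)\Rightarrow_B\sigma'$ is the least relation with: $(\mathsf{skip},\sigma)\Rightarrow_B\sigma$; $(\mathsf{alloc}\ x,\sigma)\Rightarrow_B\sigma[x\mapsto\mathsf{null}]$ if $x\notin\mathrm{dom}(\sigma)$;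 $(x:=e,\sigma)\Rightarrow_B\sigma[x\mapsto v]$ if $x\in\mathrm{dom}(\sigma)$ and $(e,\sigma)\Rightarrow_E v$; $(c_1;c_2,\sigma)\Rightarrow_B\sigma''$ if $(c_1,\sigma)\Rightarrow_B\sigma'$ and $(c_2,\sigma')\Rightarrow_B\sigma''$; $(\mathsf{if}\ e\ c_1\ c_2,\sigma)\Rightarrow_B\sigma'$ if $(e,\sigma)\Rightarrow_E v$, $v\ne0$, $(c_1,\sigma)\Rightarrow_B\sigma'$; $(\mathsf{if}\ e\ c_1\ c_2,\sigma)\Rightarrow_B\sigma'$ if $(e,\sigma)\Rightarrow_E0$, $(c_2,\sigma)\Rightarrow_B\sigma'$; $(\mathsf{while}\ e\ c,\sigma)\Rightarrow_B\sigma''$ if $(e,\sigma)\Rightarrow_E v$, $v\ne0$, $(c,\sigma)\Rightarrow_B\sigma'$, $(\mathsf{while}\ e\ c,\sigma')\Rightarrow_B\sigma''$; $(\mathsf{while}\ e\ c,\sigma)\Rightarrow_B\sigma$ if $(e,\sigma)\Rightarrow_E0$. Flag-based big-step semantics: status flags $\delta ::= \Downarrow\mid\Uparrow$ (convergent / divergent). Expression evaluation $(e,\sigma,\delta)\Rightarrow_{GE}v,\delta'$ is the least relation with: $(v,\sigma,\Downarrow)\Rightarrow_{GE}v,\Downarrow$; $(x,\sigma,\Downarrow)\Rightarrow_{GE}\sigma(x),\Downarrow$ if $x\in\mathrm{dom}(\sigma)$; if $(e_1,\sigma,\Downarrow)\Rightarrow_{GE}n_1,\delta$ and $(e_2,\sigma,\delta)\Rightarrow_{GE}n_2,\delta'$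 ($n_1,n_2$ naturals) then $(e_1\oplus e_2,\sigma,\Downarrow)\Rightarrow_{GE}\oplus(n_1,n_2),\delta'$; and $(e,\sigma,\Uparrow)\Rightarrow_{GE}v,\Uparrow$ for every value $v$. The command rules for judgments $(c,\sigma,\delta)\Rightarrow_G\sigma',\delta'$ are: $(\mathsf{skip},\sigma,\Downarrow)\Rightarrow_G\sigma,\Downarrow$; $(\mathsf{alloc}\ x,\sigma,\Downarrow)\Rightarrow_G\sigma[x\mapsto\mathsf{null}],\Downarrow$ if $x\notin\mathrm{dom}(\sigma)$; $(x:=e,\sigma,\Downarrow)\Rightarrow_G\sigma[x\mapsto v],\delta$ if $x\in\mathrm{dom}(\sigma)$ and $(e,\sigma,\Downarrow)\Rightarrow_{GE}v,\delta$; $(c_1;c_2,\sigma,\Downarrow)\Rightarrow_G\sigma'',\delta'$ if $(c_1,\sigma,\Downarrow)\Rightarrow_G\sigma',\delta$ and $(c_2,\sigma',\delta)\Rightarrow_G\sigma'',\delta'$; $(\mathsf{if}\ e\ c_1\ c_2,\sigma,\Downarrow)\Rightarrow_G\sigma',\delta'$ if $v\ne0$, $(e,\sigma,\Downarrow)\Rightarrow_{GE}v,\delta$ and $(c_1,\sigma,\delta)\Rightarrow_G\sigma',\delta'$; $(\mathsf{if}\ e\ c_1\ c_2,\sigma,\Downarrow)\Rightarrow_G\sigma',\delta'$ if $(e,\sigma,\Downarrow)\Rightarrow_{GE}0,\delta$ and $(c_2,\sigma,\delta)\Rightarrow_G\sigma',\delta'$; $(\mathsf{while}\ e\ c,\sigma,\Downarrow)\Rightarrow_G\sigma'',\delta''$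 if $(e,\sigma,\Downarrow)\Rightarrow_{GE}v,\delta$, $v\ne0$, $(c,\sigma,\delta)\Rightarrow_G\sigma',\delta'$ and $(\mathsf{while}\ e\ c,\sigma',\delta')\Rightarrow_G\sigma'',\delta''$; $(\mathsf{while}\ e\ c,\sigma,\Downarrow)\Rightarrow_G\sigma,\delta$ if $(e,\sigma,\Downarrow)\Rightarrow_{GE}0,\delta$; $(c,\sigma,\Uparrow)\Rightarrow_G\sigma',\Uparrow$ for every store $\sigma'$. $\Rightarrow_G$ denotes the inductive interpretation (least relation closed under these rules). *)

From Stdlib Require Import List PeanoNat.
Import ListNotations.

Definition Var := nat.

Inductive value : Type := VNull : value | VNat : nat -> value.

Inductive binop : Type := OPlus | OMinus | OMult.

(* the result of the operation on naturals (subtraction is truncated) *)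
Definition eval_op (o : binop) (n1 n2 : nat) : nat :=
  match o with OPlus => n1 + n2 | OMinus => n1 - n2 | OMult => n1 * n2 end.

Inductive expr : Type :=
| EVal : value -> expr
| EVar : Var -> expr
| EOp : binop -> expr -> expr -> expr.

Inductive cmd : Type :=
| CSkip : cmd
| CAlloc : Var -> cmd
| CAssign : Var -> expr -> cmd
| CSeq : cmd -> cmd -> cmd
| CIf : expr -> cmd -> cmd -> cmd
| CWhile : expr -> cmd -> cmd.

Record store : Type := mkStore {
  st_map :> Var -> option value;
  st_fin : exists l : list Var, forall x, st_map x <> None -> In x l
}.

Definition in_dom (s : store) (x : Var) : Prop := st_map s x <> None.

Definition upd_map (s : store) (x : Var) (v : value) : Var -> option value :=
  fun y => if Nat.eqb y x then Some v else st_map s y.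

Lemma upd_fin (s : store) (x : Var) (v : value) :
  exists l : list Var, forall y, upd_map s x v y <> None -> In y l.
Proof.
  destruct (st_fin s) as [l Hl]. exists (x :: l). intros y Hy.
  unfold upd_map in Hy. destruct (Nat.eqb y x) eqn:E.
  - left. symmetry. apply Nat.eqb_eq. exact E.
  - right. apply Hl. exact Hy.
Qed.

Definition upd (s : store) (x : Var) (v : value) : store :=
  mkStore (upd_map s x v) (upd_fin s x v).

Inductive evalE : expr -> store -> value -> Prop :=
| E_Val : forall v s, evalE (EVal v) s v
| E_Var : forall x s v, st_map s x = Some v -> evalE (EVar x) s v
| E_Op : forall o e1 e2 s n1 n2,
    evalE e1 s (VNat n1) -> evalE e2 s (VNat n2) ->
    evalE (EOp o e1 e2) s (VNat (eval_op o n1 n2)).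

Inductive evalB : cmd -> store -> store -> Prop :=
| B_Skip : forall s, evalB CSkip s s
| B_Alloc : forall x s, ~ in_dom s x -> evalB (CAlloc x) s (upd s x VNull)
| B_Assign : forall x e s v, in_dom s x -> evalE e s v ->
    evalB (CAssign x e) s (upd s x v)
| B_Seq : forall c1 c2 s s' s'', evalB c1 s s' -> evalB c2 s' s'' ->
    evalB (CSeq c1 c2) s s''
| B_IfT : forall e c1 c2 s s' v, evalE e s v -> v <> VNat 0 ->
    evalB c1 s s' -> evalB (CIf e c1 c2) s s'
| B_IfF : forall e c1 c2 s s', evalE e s (VNat 0) ->
    evalB c2 s s' -> evalB (CIf e c1 c2) s s'
| B_WhileT : forall e c s s' s'' v, evalE e s v -> v <> VNat 0 ->
    evalB c s s' -> evalB (CWhile e c) s' s'' -> evalB (CWhile e c) s s''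
| B_WhileF : forall e c s, evalE e s (VNat 0) -> evalB (CWhile e c) s s.

(* Status flags: Conv = convergent (⇓), Div = divergent (⇑) *)
Inductive flag : Type := Conv | Div.

Inductive evalGE : expr -> store -> flag -> value -> flag -> Prop :=
| GE_Val : forall v s, evalGE (EVal v) s Conv v Conv
| GE_Var : forall x s v, st_map s x = Some v -> evalGE (EVar x) s Conv v Conv
| GE_Op : forall o e1 e2 s n1 n2 d d',
    evalGE e1 s Conv (VNat n1) d -> evalGE e2 s d (VNat n2) d' ->
    evalGE (EOp o e1 e2) s Conv (VNat (eval_op o n1 n2)) d'
| GE_Div : forall e s v, evalGE e s Div v Div.

Inductive evalG : cmd -> store -> flag -> store -> flag -> Prop :=
| G_Skip : forall s, evalG CSkip s Conv s Conv
| G_Alloc : forall x s, ~ in_dom s x ->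
    evalG (CAlloc x) s Conv (upd s x VNull) Conv
| G_Assign : forall x e s v d, in_dom s x -> evalGE e s Conv v d ->
    evalG (CAssign x e) s Conv (upd s x v) d
| G_Seq : forall c1 c2 s s' s'' d d',
    evalG c1 s Conv s' d -> evalG c2 s' d s'' d' ->
    evalG (CSeq c1 c2) s Conv s'' d'
| G_IfT : forall e c1 c2 s s' v d d', v <> VNat 0 ->
    evalGE e s Conv v d -> evalG c1 s d s' d' ->
    evalG (CIf e c1 c2) s Conv s' d'
| G_IfF : forall e c1 c2 s s' d d',
    evalGE e s Conv (VNat 0) d -> evalG c2 s d s' d' ->
    evalG (CIf e c1 c2) s Conv s' d'
| G_WhileT : forall e c s s' s'' v d d' d'',
    evalGE e s Conv v d -> v <> VNat 0 -> evalG c s d s' d' ->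
    evalG (CWhile e c) s' d' s'' d'' -> evalG (CWhile e c) s Conv s'' d''
| G_WhileF : forall e c s d, evalGE e s Conv (VNat 0) d ->
    evalG (CWhile e c) s Conv s d
| G_Div : forall c s s', evalG c s Div s' Div.

(** No rule creates [Div] out of [Conv]: a [Div] output is only ever
    propagated from a [Div] input. So by induction a flag-based derivation
    started from [Conv] ends in [Conv] with all premises started from [Conv],
    and erasing the flags yields a big-step derivation; conversely a big-step
    derivation is decorated with [Conv] everywhere. *)


Lemma evalE_evalGE (e : expr) (s : store) (v : value) :
  evalE e s v -> evalGE e s Conv v Conv.
Proof. induction 1; econstructor; eauto. Qed.

Lemma evalGE_Conv (e : expr) (s : store) (d : flag) (v : value) (d' : flag) :
  evalGE e s d v d' -> d = Conv -> d' = Conv /\ evalE e s v.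
Proof.
  induction 1; intros Hd; try discriminate.
  - split; [reflexivity | constructor].
  - split; [reflexivity | now constructor].
  - destruct (IHevalGE1 eq_refl) as [-> He1].
    destruct (IHevalGE2 eq_refl) as [-> He2].
    split; [reflexivity | now constructor].
Qed.

Arguments evalGE_Conv {e s d v d'}.

Lemma evalB_evalG (c : cmd) (s s' : store) :
  evalB c s s' -> evalG c s Conv s' Conv.
Proof.
  induction 1.
  - constructor.
  - now constructor.
  - econstructor; eauto using evalE_evalGE.
  - econstructor; eauto.
  - eapply G_IfT; eauto using evalE_evalGE.
  - eapply G_IfF; eauto using evalE_evalGE.
  - eapply G_WhileT; eauto using evalE_evalGE.
  - eapply G_WhileF; eauto using evalE_evalGE.
Qed.

Lemma evalG_Conv (c : cmd) (s : store) (d : flag) (s' : store) (d' : flag) :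
  evalG c s d s' d' -> d = Conv -> d' = Conv /\ evalB c s s'.
Proof.
  induction 1; intros Hd; try discriminate.
  - split; [reflexivity | constructor].
  - split; [reflexivity | now constructor].
  - destruct (evalGE_Conv H0 eq_refl) as [-> He].
    split; [reflexivity | now constructor].
  - destruct (IHevalG1 eq_refl) as [-> Hc1].
    destruct (IHevalG2 eq_refl) as [-> Hc2].
    split; [reflexivity | econstructor; eauto].
  - destruct (evalGE_Conv H0 eq_refl) as [-> He].
    destruct (IHevalG eq_refl) as [-> Hc1].
    split; [reflexivity | eapply B_IfT; eauto].
  - destruct (evalGE_Conv H eq_refl) as [-> He].
    destruct (IHevalG eq_refl) as [-> Hc2].
    split; [reflexivity | eapply B_IfF; eauto].
  - destruct (evalGE_Conv H eq_refl) as [-> He].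
    destruct (IHevalG1 eq_refl) as [-> Hc].
    destruct (IHevalG2 eq_refl) as [-> Hw].
    split; [reflexivity | eapply B_WhileT; eauto].
  - destruct (evalGE_Conv H eq_refl) as [-> He].
    split; [reflexivity | now apply B_WhileF].
Qed.

Arguments evalG_Conv {c s d s' d'}.

Theorem theorem17 : forall (c : cmd) (s s' : store),
  evalB c s s' <-> evalG c s Conv s' Conv.
Proof.
  intros c s s'; split.
  - apply evalB_evalG.
  - intros H; exact (proj2 (evalG_Conv H eq_refl)).
Qed.
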